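(* Let $G$ be a connected simple graph with $v$ vertices and $|E|$ edges, and let $p_1=|E|-v+1$. Then $H^{1,v-1}_{\mathcal A_2}(G)\cong\mathbb Z^{p_1}$ if $G$ is bipartite, and $H^{1,v-1}_{\mathcal A_2}(G)\cong\mathbb Z^{p_1-1}\oplus\mathbb Z_2$ if $G$ has an odd cycle.
   Context: $\mathcal A_2=\mathbb Z[x]/(x^2)$. For a finite graph $G$ with a fixed total order on its edge set $E(G)$ and $s\subseteq E(G)$, $[G:s]$ is the spanning subgraph with edge set $s$. An enhanced state is a pair $(s,c)$ where $c$ assigns to each component $C$ of $[G:s]$ an exponent $c(C)\in\{0,1\}$ (weight $x^{c(C)}$); its bidegree is $(|s|,\sum_C c(C))$. $C^{i,j}_{\mathcal A_2}(G)$ is the free abelian group on enhanced states of bidegree $(i,j)$, with differential $d=\sum_{e\notin s}(-1)^{|\{f\in s:f<e\}|}d_e$, where $d_e(s,c)$ is the enhanced state on $s\cup\{e\}$ obtained, if $e$ joins distinct components $C_1,C_2$, by giving the merged component weight $x^{c(C_1)}x^{c(C_2)}\in\mathcal A_2$ (zero if the exponent sum is $\ge2$), other weights unchanged, and, if both endpoints of $e$ lie in one component, by keeping all weights. $H^{i,j}_{\mathcal A_2}(G)$ is its cohomology. *)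

From HB Require Import structures.
From mathcomp Require Import all_boot all_order all_algebra.
Set Implicit Arguments. Unset Strict Implicit. Unset Printing Implicit Defensive.
Import GRing.Theory.
Local Open Scope ring_scope.

(* A finite graph: vertex type V, m edges indexed by 'I_m (the ordinal order on
   'I_m is the fixed total order on E(G)), edge k has endpoints ends k. *)

Definition simple_graph (V : finType) (m : nat) (ends : 'I_m -> V * V) : Prop :=
  (forall k, (ends k).1 != (ends k).2) /\
  (forall k l, (ends k == ends l) || (ends k == ((ends l).2, (ends l).1)) -> k = l).

Definition adj (V : finType) (m : nat) (ends : 'I_m -> V * V) (s : {set 'I_m}) : rel V :=
  fun x y => [exists k in s, (ends k == (x, y)) || (ends k == (y, x))].

Definition connected_graph (V : finType) (m : nat) (ends : 'I_m -> V * V) : Prop :=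
  forall x y, connect (adj ends setT) x y.

Definition bipartite (V : finType) (m : nat) (ends : 'I_m -> V * V) : Prop :=
  exists col : V -> bool, forall k, col (ends k).1 != col (ends k).2.

Definition has_odd_cycle (V : finType) (m : nat) (ends : 'I_m -> V * V) : Prop :=
  exists p : seq V, [/\ uniq p, odd (size p), (3 <= size p)%N & cycle (adj ends setT) p].

(* Enhanced states are encoded as pairs (s, c) with c : V -> bool constant on
   the components of [G:s] (c x = exponent of the weight of the component of x). *)
Definition St (V : finType) (m : nat) := ({set 'I_m} * {ffun V -> bool})%type.

Definition valid_state (V : finType) (m : nat) (ends : 'I_m -> V * V) (u : St V m) : bool :=
  [forall x, forall y, connect (adj ends u.1) x y ==> (u.2 x == u.2 y)].

(* second degree: sum over components of the exponents *)
Definition jdeg (V : finType) (m : nat) (ends : 'I_m -> V * V) (u : St V m) : nat :=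
  #|[set x | roots (adj ends u.1) x && u.2 x]|.

Definition dstate (V : finType) (m : nat) (ends : 'I_m -> V * V) (k : 'I_m)
    (u : St V m) : option (St V m) :=
  let s := u.1 in let c := u.2 in
  let x := (ends k).1 in let y := (ends k).2 in
  let s' := k |: s in
  if connect (adj ends s) x y then Some (s', c)
  else if c x && c y then None
  else Some (s', [ffun z => if connect (adj ends s') z x then c x || c y else c z]).

Definition dcoef (V : finType) (m : nat) (ends : 'I_m -> V * V) (u t : St V m) : int :=
  \sum_(k < m | k \notin u.1)
     (if dstate ends k u == Some t then (-1) ^+ #|[set f in u.1 | (f < k)%N]| else 0).

Definition Chain (V : finType) (m : nat) := {ffun St V m -> int}.

Definition dif (V : finType) (m : nat) (ends : 'I_m -> V * V) (f : Chain V m) : Chain V m :=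
  [ffun t => \sum_(u : St V m) f u * dcoef ends u t].

Definition inC (V : finType) (m : nat) (ends : 'I_m -> V * V) (i j : nat) (f : Chain V m) : Prop :=
  forall u, f u != 0 -> [&& valid_state ends u, #|u.1| == i & jdeg ends u == j].

Definition cocycle (V : finType) (m : nat) (ends : 'I_m -> V * V) (i j : nat) (f : Chain V m) : Prop :=
  inC ends i j f /\ dif ends f = 0.

Definition coboundary (V : finType) (m : nat) (ends : 'I_m -> V * V) (i j : nat) (f : Chain V m) : Prop :=
  if i is i'.+1 then exists g, inC ends i' j g /\ dif ends g = f else f = 0.

(* H^{i,j}(G) = Z^{i,j}/B^{i,j} is isomorphic to A : an additive surjection from
   the cocycles onto A whose kernel is exactly the coboundaries *)
Definition H_iso (V : finType) (m : nat) (ends : 'I_m -> V * V) (i j : nat) (A : zmodType) : Prop :=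
  exists phi : Chain V m -> A,
    [/\ forall f g, cocycle ends i j f -> cocycle ends i j g -> phi (f - g) = phi f - phi g,
        forall a, exists2 f, cocycle ends i j f & phi f = a
      & forall f, cocycle ends i j f -> (phi f = 0 <-> coboundary ends i j f)].

From mathcomp Require Import all_boot all_order all_algebra.
From mathcomp Require Import ring zify.
Set Implicit Arguments. Unset Strict Implicit. Unset Printing Implicit Defensive.
Import GRing.Theory.

(* In bidegree (1, v-1) every component carries x, so C^{1,v-1} is free on
   the edges; in bidegree (0, v-1) exactly one vertex w carries 1, so
   C^{0,v-1} is free on the vertices.  In a simple graph adding an edge to
   a state of C^{1,v-1} merges two x-components, which gives 0, while d
   sends the vertex state w to the sum of the edges at w.  Hence
   H^{1,v-1}(G) is the cokernel of the unsigned incidence map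
   a |-> (a x + a y)_{xy} from Z^V to Z^E.
   Fix a breadth-first spanning tree rooted at r.  Modulo the image, every
   h in Z^E has a residual vanishing on the tree edges, and the residual of
   the image of a is (sign x + sign y) a(r) = 2 sigma a(r), where
   sign = (-1)^depth and sigma vanishes on the edges whose ends have depths
   of different parity.  If G is bipartite sigma = 0, so the residuals on
   the p_1 non-tree edges are free coordinates.  Otherwise some non-tree
   edge e0 has sigma e0 = +-1: the residual at e0 modulo 2 gives the Z_2,
   and the other p_1 - 1 coordinates, corrected by a multiple of the
   residual at e0, are free. *)

Section Pushforward.
Variables (T U : finType) (R : nmodType) (f : T -> U).
Local Open Scope ring_scope.

Definition pushf (h : T -> R) : {ffun U -> R} := [ffun u => \sum_(t | f t == u) h t].

Lemma pushf_out h u : (forall t, f t != u) -> pushf h u = 0.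
Proof. by move=> notu; rewrite ffunE big_pred0 // => t; apply/negbTE. Qed.

Lemma pushf_supp h u : pushf h u != 0 -> exists t, f t = u.
Proof.
case: (pickP (fun t => f t == u)) => [t /eqP <-|none]; first by exists t.
by rewrite pushf_out ?eqxx // => t; rewrite none.
Qed.

Hypothesis f_inj : injective f.

Lemma pushfE h t : pushf h (f t) = h t.
Proof. by rewrite ffunE (big_pred1 t) // => t'; rewrite /= (inj_eq f_inj). Qed.

Lemma pushf_restrict (c : {ffun U -> R}) :
  (forall u, c u != 0 -> exists t, f t = u) -> c = pushf [ffun t => c (f t)].
Proof.
move=> supp; apply/ffunP=> u.
case: (pickP (fun t => f t == u)) => [t /eqP <-|none]; first by rewrite pushfE ffunE.
rewrite pushf_out => [|t]; last by rewrite none.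
by apply/eqP; apply: contraT => /supp[t /eqP]; rewrite none.
Qed.

End Pushforward.

Section EnumSet.
Variables (T : finType) (S : {set T}) (n : nat) (cardS : n = #|S|).

Definition enum_at (i : 'I_n) : T := enum_val (cast_ord cardS i).

Lemma enum_atP i : enum_at i \in S.
Proof. exact: enum_valP. Qed.

Lemma enum_at_inj : injective enum_at.
Proof. by move=> i j /enum_val_inj /cast_ord_inj. Qed.

Lemma enum_at_onto k : k \in S -> exists i, enum_at i = k.
Proof.
move=> kS; exists (cast_ord (esym cardS) (enum_rank_in kS k)).
by rewrite /enum_at cast_ordKV enum_rankK_in.
Qed.

End EnumSet.

Lemma Zp2_intr_eq0 (n : int) : (n%:~R == 0 :> 'Z_2)%R = (2 %| n)%Z.
Proof. by rewrite (dvdz_pcharf (pchar_Fp (isT : prime 2))). Qed.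

Section Graph.
Variables (V : finType) (m : nat) (ends : 'I_m -> V * V).

Definition joins k x y := (ends k == (x, y)) || (ends k == (y, x)).

Lemma adj_joins s x y : adj ends s x y -> exists2 k, k \in s & joins k x y.
Proof. by case/existsP=> k /andP[ks jk]; exists k. Qed.

Lemma adj_sym s : symmetric (adj ends s).
Proof.
move=> x y; apply/existsP/existsP=> -[k /andP[ks jk]]; exists k;
by rewrite ks orbC.
Qed.

Lemma odd_cycle_not_bipartite : has_odd_cycle ends -> ~ bipartite ends.
Proof.
case=> p [_ odd_p _ cyc] [col col_ends].
have col_adj y z : adj ends setT y z -> col y != col z.
  by case/adj_joins=> k _ /orP[]/eqP ek; move: (col_ends k); rewrite ek // eq_sym.
have col_last y q : path (adj ends setT) y q -> col (last y q) = col y (+) odd (size q).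
  elim: q y => [|z q IH] y /=; first by rewrite addbF.
  case/andP=> /col_adj yz /IH ->; move: yz.
  by case: (col y); case: (col z); case: odd.
case: p odd_p cyc => [//|x p] /= odd_p /col_last.
by rewrite last_rcons size_rcons /= odd_p; case: (col x).
Qed.

Local Open Scope ring_scope.

Definition edge_sum (a : V -> int) : {ffun 'I_m -> int} :=
  [ffun k => a (ends k).1 + a (ends k).2].

Lemma edge_sum_joins a k x y : joins k x y -> edge_sum a k = a x + a y.
Proof. by rewrite ffunE => /orP[]/eqP->; rewrite // addrC. Qed.

Definition incidence_coker (A : zmodType) : Prop :=
  exists Phi : {ffun 'I_m -> int} -> A,
    [/\ {morph Phi : h1 h2 / h1 - h2}, forall z, exists h, Phi h = z
      & forall h, Phi h = 0 <-> exists a, h = edge_sum a].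

End Graph.

Section SpanningTree.
Variables (V : finType) (m : nat) (ends : 'I_m -> V * V).
Hypothesis conn : connected_graph ends.
Variables (r : V) (k0 : 'I_m).
Local Notation E := (adj ends setT).

Fixpoint reach n w : bool :=
  if n is n'.+1 then reach n' w || [exists y, reach n' y && E y w] else w == r.

Lemma reach_path x p n : path E x p -> reach n x -> reach (n + size p) (last x p).
Proof.
elim: p x n => [|y p IH] x n /=; first by rewrite addn0.
case/andP=> Exy p_path reach_x; rewrite addnS -addSn; apply: IH => //=.
by apply/orP; right; apply/existsP; exists x; rewrite reach_x.
Qed.

Lemma exists_reach w : exists n, reach n w.
Proof.
have /connectP[p p_path ->] := conn r w.
by exists (0 + size p); apply: reach_path => /=.
Qed.

Definition depth w := ex_minn (exists_reach w).

Lemma depth_reach w : reach (depth w) w.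
Proof. by rewrite /depth; case: ex_minnP. Qed.

Lemma depth_min w n : reach n w -> depth w <= n.
Proof. by rewrite /depth; case: ex_minnP => d _ min_d /min_d. Qed.

Lemma depth_root : depth r = 0.
Proof. by apply/eqP; rewrite -leqn0; apply: depth_min; rewrite /= eqxx. Qed.

Lemma depth_eq0 w : depth w = 0 -> w = r.
Proof. by move=> d0; have := depth_reach w; rewrite d0 => /eqP. Qed.

Definition parent w := odflt r [pick y | reach (depth w).-1 y && E y w].

Lemma parentP w : w != r -> depth w = (depth (parent w)).+1 /\ E (parent w) w.
Proof.
move=> wr; rewrite /parent.
have := depth_reach w; have := @depth_min w.
case: (depth w) => [|n] min_w /=; first by rewrite (negbTE wr).
case/orP=> [/min_w|reach_w]; first by rewrite ltnn.
case: pickP => [y /andP[ry Eyw]|none]; last first.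
  by case/existsP: reach_w => y /andP[ry Eyw]; move: (none y); rewrite ry Eyw.
split=> //; congr S; apply/eqP; rewrite eqn_leq (depth_min ry) andbT -ltnS.
by apply: min_w => /=; apply/orP; right; apply/existsP; exists y; rewrite depth_reach.
Qed.

Lemma depth_ind (P : V -> Prop) :
  P r -> (forall w, w != r -> P (parent w) -> P w) -> forall w, P w.
Proof.
move=> Pr Pparent w; move: {2}(depth w) (erefl (depth w)) => n.
elim: n w => [|n IH] w dw; first by rewrite (depth_eq0 dw).
have wr : w != r by apply: contra_eqN dw => /eqP->; rewrite depth_root.
apply: Pparent => //; apply: IH.
by have [dp _] := parentP wr; move: dw; rewrite dp => -[].
Qed.

(* k0 is only a default: tree_edge r is junk. *)
Definition tree_edge w := odflt k0 [pick k | joins ends k (parent w) w].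

Lemma tree_edgeP w : w != r -> joins ends (tree_edge w) (parent w) w.
Proof.
case/parentP=> _ /adj_joins[k _ jk]; rewrite /tree_edge.
by case: pickP => [//|/(_ k)]; rewrite jk.
Qed.

Definition tree_edges := [set tree_edge w | w in [set~ r]].

Definition child k := let: (x, y) := ends k in if depth x < depth y then y else x.

Lemma child_tree_edge w : w != r -> child (tree_edge w) = w.
Proof.
move=> wr; have [dw _] := parentP wr.
by case/orP: (tree_edgeP wr) => /eqP e; rewrite /child e dw ?ltnSn // ltnNge leqnSn.
Qed.

Lemma tree_edge_inj : {in [set~ r] &, injective tree_edge}.
Proof. by apply: (can_in_inj (g := child)) => w; rewrite !inE => /child_tree_edge. Qed.

Lemma card_tree_edges : #|tree_edges| = (#|V| - 1)%N.
Proof.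
rewrite card_in_imset; last exact: tree_edge_inj.
by rewrite cardsC1 subn1.
Qed.

Lemma card_non_tree_edges : (m + 1 - #|V|)%N = #|~: tree_edges|.
Proof.
have Vpos : (0 < #|V|)%N by apply/card_gt0P; exists r.
have := cardsC tree_edges; rewrite card_tree_edges card_ord.
by move: #|~: tree_edges| Vpos => n; lia.
Qed.

Definition same_parity k := odd (depth (ends k).1) == odd (depth (ends k).2).

Lemma tree_edge_parity w : w != r -> ~~ same_parity (tree_edge w).
Proof.
move=> wr; have [dw _] := parentP wr.
by case/orP: (tree_edgeP wr) => /eqP e; rewrite /same_parity e /= dw /=; case: odd.
Qed.

Lemma bipartite_parity : bipartite ends -> forall k, ~~ same_parity k.
Proof.
case=> col col_ends.
have col_depth w : col w = col r (+) odd (depth w).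
  elim/depth_ind: w => [|w wr IH]; first by rewrite depth_root addbF.
  have [dw _] := parentP wr; rewrite dw /= addbN -IH.
  by case/orP: (tree_edgeP wr) => /eqP e; move: (col_ends (tree_edge w));
    rewrite e /=; case: (col w); case: (col (parent w)).
move=> k; move: (col_ends k).
rewrite /same_parity (col_depth (ends k).1) (col_depth (ends k).2).
by case: (col r); case: odd; case: odd.
Qed.

Lemma odd_cycle_parity :
  has_odd_cycle ends -> exists2 k, k \notin tree_edges & same_parity k.
Proof.
move=> odd_cycle; have [/existsP[k par_k]|] := boolP [exists k, same_parity k].
  exists k => //; apply: contraL par_k => /imsetP[w]; rewrite !inE => wr ->.
  exact: tree_edge_parity.
move=> /existsPn no_par; case: (odd_cycle_not_bipartite odd_cycle).
by exists (fun w => odd (depth w)) => k; apply: no_par.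
Qed.

Local Open Scope ring_scope.

Definition sign w : int := (-1) ^+ depth w.

Lemma sign_root : sign r = 1.
Proof. by rewrite /sign depth_root. Qed.

Lemma sign_parent w : w != r -> sign w = - sign (parent w).
Proof. by case/parentP=> dw _; rewrite /sign dw exprS mulN1r. Qed.

Definition sigma k : int := if same_parity k then sign (ends k).1 else 0.

Lemma edge_sum_sign k : edge_sum ends sign k = 2 * sigma k.
Proof.
rewrite ffunE /sigma /same_parity /sign -!(signr_odd _ (depth _)).
by case: odd; case: odd.
Qed.

Lemma sigma_tree_edge w : w != r -> sigma (tree_edge w) = 0.
Proof. by move=> /tree_edge_parity /negbTE; rewrite /sigma => ->. Qed.

Lemma sigma_bipartite : bipartite ends -> forall k, sigma k = 0.
Proof. by move=> /bipartite_parity bip k; rewrite /sigma (negbTE (bip k)). Qed.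

Lemma sigma_sqr k : same_parity k -> sigma k * sigma k = 1.
Proof.
by move=> par_k; rewrite /sigma par_k /sign -exprD addnn -signr_odd odd_double.
Qed.

(* The potential of h: zero at r, with edge sums equal to h on tree edges. *)
Fixpoint potn (h : 'I_m -> int) n w : int :=
  if n is n'.+1 then h (tree_edge w) - potn h n' (parent w) else 0.

Definition pot h w := potn h (depth w) w.

Lemma pot_root h : pot h r = 0.
Proof. by rewrite /pot depth_root. Qed.

Lemma pot_parent h w : w != r -> pot h w = h (tree_edge w) - pot h (parent w).
Proof. by case/parentP=> dw _; rewrite /pot dw. Qed.

Lemma potB (h1 h2 : {ffun 'I_m -> int}) w : pot (h1 - h2) w = pot h1 w - pot h2 w.
Proof.
elim/depth_ind: w => [|w wr IH]; first by rewrite !pot_root subr0.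
by rewrite !(pot_parent _ wr) IH !ffunE; ring.
Qed.

Lemma pot_edge_sum b w : pot (edge_sum ends b) w = b w - sign w * b r.
Proof.
elim/depth_ind: w => [|w wr IH]; first by rewrite pot_root sign_root mul1r subrr.
rewrite pot_parent // IH (edge_sum_joins _ (tree_edgeP wr)) (sign_parent wr); ring.
Qed.

Lemma pot_eq0 h w : (forall w, w != r -> h (tree_edge w) = 0) -> pot h w = 0.
Proof.
move=> h_tree; elim/depth_ind: w => [|w wr IH]; first exact: pot_root.
by rewrite pot_parent // IH h_tree // subrr.
Qed.

Definition resid (h : {ffun 'I_m -> int}) : {ffun 'I_m -> int} :=
  h - edge_sum ends (pot h).

Lemma residE (h : {ffun 'I_m -> int}) k : resid h k = h k - edge_sum ends (pot h) k.
Proof. by rewrite /resid; set e := edge_sum _ _; rewrite !ffunE. Qed.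

Lemma residB : {morph resid : h1 h2 / h1 - h2}.
Proof. by move=> h1 h2; apply/ffunP=> k; rewrite !ffunE !potB; ring. Qed.

Lemma resid_tree_edge h w : w != r -> resid h (tree_edge w) = 0.
Proof.
move=> wr; rewrite residE (edge_sum_joins _ (tree_edgeP wr)) (pot_parent _ wr); ring.
Qed.

Lemma resid_id (h : {ffun 'I_m -> int}) :
  (forall w, w != r -> h (tree_edge w) = 0) -> resid h = h.
Proof.
by move=> h_tree; apply/ffunP=> k; rewrite residE !ffunE !(pot_eq0 _ h_tree) subr0.
Qed.

Lemma resid_edge_sum b k : resid (edge_sum ends b) k = 2 * sigma k * b r.
Proof. by rewrite -(edge_sum_sign k) residE !ffunE !pot_edge_sum; ring. Qed.

Lemma edge_sum_imageP h : (exists a, h = edge_sum ends a) <->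
  exists c, {in ~: tree_edges, forall k, resid h k = 2 * sigma k * c}.
Proof.
split=> [[a ->]|[c resid_c]]; first by exists (a r) => k _; rewrite resid_edge_sum.
have {}resid_c k : resid h k = 2 * sigma k * c.
  have [/imsetP[w]|kN] := boolP (k \in tree_edges); last by rewrite resid_c ?inE.
  by rewrite !inE => wr ->; rewrite resid_tree_edge // sigma_tree_edge // !mulr0 mul0r.
exists (fun w => pot h w + sign w * c); apply/ffunP=> k.
move: (resid_c k); rewrite residE -(edge_sum_sign k) !ffunE.
by move=> /(canRL (subrK _)) ->; ring.
Qed.

Lemma coker_bipartite :
  bipartite ends -> incidence_coker ends 'rV[int]_(m + 1 - #|V|).
Proof.
move=> /sigma_bipartite sigma0; pose e := enum_at card_non_tree_edges.
have e_N i : e i \in ~: tree_edges := enum_atP card_non_tree_edges i.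
exists (fun h => \row_i resid h (e i)); split.
- by move=> h1 h2; apply/rowP=> i; rewrite !mxE residB !ffunE.
- move=> z; exists (pushf e (fun i => z 0 i)); apply/rowP=> i.
  rewrite mxE resid_id ?pushfE //; first exact: enum_at_inj.
  move=> w wr; apply: pushf_out => j; apply: contraTneq (e_N j) => ->.
  by rewrite !inE negbK imset_f // !inE.
- move=> h; rewrite edge_sum_imageP; split=> [/rowP h0|[c h_c]].
    exists 0 => k /(enum_at_onto card_non_tree_edges)[i <-]; have := h0 i.
    by rewrite !mxE sigma0 => ->; rewrite !mulr0.
  by apply/rowP=> i; rewrite !mxE h_c // sigma0 mulr0 mul0r.
Qed.

Lemma coker_odd_cycle : has_odd_cycle ends ->
  incidence_coker ends ('rV[int]_(m + 1 - #|V| - 1) * 'Z_2)%type.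
Proof.
case/odd_cycle_parity=> e0 e0_tree par_e0.
have e0N : e0 \in ~: tree_edges by rewrite inE.
set N' := ~: tree_edges :\ e0.
have cardN' : (m + 1 - #|V| - 1)%N = #|N'|.
  by rewrite card_non_tree_edges (cardsD1 e0) e0N add1n subn1.
pose e := enum_at cardN'; set s0 := sigma e0.
have s0_sqr : s0 * s0 = 1 by apply: sigma_sqr.
have e_N' i : e i \in N' := enum_atP cardN' i.
have e_N i : e i \in ~: tree_edges by move: (e_N' i); rewrite inE => /andP[].
have e_e0 i : (e i == e0) = false by move: (e_N' i); rewrite !inE => /andP[/negbTE].
exists (fun h => (\row_i (resid h (e i) - s0 * sigma (e i) * resid h e0),
                 (resid h e0)%:~R)); split.
- move=> h1 h2; rewrite residB !ffunE /=; congr pair; last by rewrite intrB.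
  by apply/rowP=> i; rewrite !mxE !ffunE; ring.
- case=> z b; pose g := pushf e (fun i => z 0 i + s0 * sigma (e i) * (b : nat)%:Z).
  pose h := [ffun k => if k == e0 then (b : nat)%:Z else g k].
  have h_tree w : w != r -> h (tree_edge w) = 0.
    move=> wr; have tw : tree_edge w \in tree_edges by rewrite imset_f // !inE.
    rewrite ffunE ifN; last by apply: contraTneq tw => ->.
    by apply: pushf_out => i; apply: contraTneq (e_N i) => ->; rewrite inE tw.
  exists h; rewrite resid_id //; congr pair.
    apply/rowP=> i; rewrite !mxE [h (e i)]ffunE [h e0]ffunE e_e0 eqxx.
    by rewrite pushfE; [ring | exact: enum_at_inj].
  by rewrite ffunE eqxx -pmulrn natr_Zp.
- move=> h; rewrite edge_sum_imageP; split=> [[/rowP h0 /eqP]|[c h_c]].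
    rewrite Zp2_intr_eq0 => /dvdzP[t h_e0]; exists (s0 * t) => k kN.
    have [->|k_e0] := eqVneq k e0.
      by rewrite h_e0 -/s0 -[LHS]mul1r -s0_sqr; ring.
    have kN' : k \in N' by rewrite in_setD1 k_e0.
    have [i <-] := enum_at_onto cardN' kN'.
    by move: (h0 i); rewrite !mxE h_e0 => /eqP; rewrite subr_eq0 => /eqP ->; ring.
  congr pair; first apply/rowP=> i.
    rewrite !mxE !h_c ?e_N // -/s0.
    by rewrite -[X in X - _]mulr1 -s0_sqr; ring.
  by apply/eqP; rewrite Zp2_intr_eq0 h_c // -!mulrA dvdz_mulr.
Qed.

End SpanningTree.

Lemma coker_edgeless (V : finType) (ends : 'I_0 -> V * V) :
  (0 < #|V|)%N -> incidence_coker ends 'rV[int]_(0 + 1 - #|V|).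
Proof.
move=> Vpos; exists (fun _ => 0%R); split=> [h1 h2|z|h]; first by rewrite subr0.
  by exists 0%R; apply/rowP=> -[i lt_i]; lia.
by split=> // _; exists (fun _ => 0%R); apply/ffunP=> -[].
Qed.

Section ChainGroups.
Variables (V : finType) (m : nat) (ends : 'I_m -> V * V).
Hypothesis simple : simple_graph ends.

Lemma ends_neq k : (ends k).1 != (ends k).2.
Proof. by case: simple. Qed.

Lemma connect_sym_adj s : connect_sym (adj ends s).
Proof. exact/sym_connect_sym/adj_sym. Qed.

Lemma connect_set0 x y : connect (adj ends set0) x y = (x == y).
Proof.
apply/idP/eqP=> [/connectP[[|z p] /= p_path ->]//|->]; last exact: connect0.
by case/andP: p_path => /existsP[k]; rewrite inE.
Qed.

Lemma roots_set0 x : roots (adj ends set0) x.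
Proof. by have := connect_root (adj ends set0) x; rewrite connect_set0 eq_sym. Qed.

Definition ends_seq e := [:: (ends e).1; (ends e).2].

Lemma adj_edge e : adj ends [set e] (ends e).1 (ends e).2.
Proof. by apply/existsP; exists e; rewrite inE -surjective_pairing !eqxx. Qed.

Lemma connect_edge e x y : connect (adj ends [set e]) x y ->
  (x == y) || (x \in ends_seq e) && (y \in ends_seq e).
Proof.
have adj_ends z z' :
    adj ends [set e] z z' -> (z \in ends_seq e) && (z' \in ends_seq e).
  by case/adj_joins=> k; rewrite inE /ends_seq => /eqP-> /orP[]/eqP->;
    rewrite !inE !eqxx ?orbT.
case/connectP=> -[|z p] /=; first by move=> _ ->; rewrite eqxx.
case/andP=> /adj_ends/andP[-> z_e] p_path ->; apply/orP; right.
by elim: p z z_e p_path => //= z' p IH z _ /andP[/adj_ends/andP[_ /IH]].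
Qed.

Lemma not_connect_other_edge e k :
  k != e -> ~~ connect (adj ends [set e]) (ends k).1 (ends k).2.
Proof.
case: simple => _ uniq_edge ke; apply: contra_neqN ke => /connect_edge.
rewrite (negbTE (ends_neq k)) /= !inE => ends_k; apply: uniq_edge.
move: ends_k (ends_neq k) (ends_neq e); rewrite /ends_seq.
case: (ends k) => x y; case: (ends e) => a b /=.
by case/andP=> /orP[]/eqP-> /orP[]/eqP->; rewrite ?eqxx ?orbT.
Qed.

Lemma roots_edge e : exists o, forall x, roots (adj ends [set e]) x = (x != o).
Proof.
set a := (ends e).1; set b := (ends e).2.
set rho := fingraph.root (adj ends [set e]) a.
have ab_e : a != b := ends_neq e.
have ba_e : b != a by rewrite eq_sym.
have root_ab x : x \in ends_seq e -> fingraph.root (adj ends [set e]) x = rho.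
  rewrite !inE => /orP[]/eqP->; rewrite // /rho; apply/eqP.
  rewrite root_connect 1?connect_sym_adj ?connect1 ?adj_edge //.
  exact: connect_sym_adj.
have rho_ab : rho \in ends_seq e.
  have /orP[/eqP a_rho|/andP[]//] := connect_edge (connect_root (adj ends [set e]) a).
  by rewrite /rho -a_rho !inE eqxx.
exists (if rho == a then b else a) => x.
have [x_e|x_e] := boolP (x \in ends_seq e); last first.
  have /orP[/eqP root_x|/andP[]] := connect_edge (connect_root (adj ends [set e]) x);
    last by rewrite (negbTE x_e).
  rewrite /roots /= -root_x eqxx; apply/esym; apply: contraNneq x_e => ->.
  by case: ifP; rewrite !inE eqxx ?orbT.
rewrite /roots /= root_ab //; move: x_e rho_ab; rewrite !inE -/a -/b.
by case/orP=> /eqP-> /orP[]/eqP->; rewrite ?(negbTE ab_e) ?(negbTE ba_e) ?eqxx.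
Qed.

Definition edge_state e : St V m := ([set e], [ffun _ => true]).
Definition vertex_state w : St V m := (set0, [ffun z => z != w]).

Lemma edge_state_inj : injective edge_state.
Proof. by move=> e e' [] /setP/(_ e); rewrite !inE eqxx => /esym/eqP. Qed.

Lemma vertex_state_inj : injective vertex_state.
Proof. by move=> w w' [] /ffunP/(_ w); rewrite !ffunE eqxx => /esym/negbFE/eqP. Qed.

Lemma edge_state_bideg e : [&& valid_state ends (edge_state e),
  #|(edge_state e).1| == 1 & jdeg ends (edge_state e) == #|V| - 1].
Proof.
have [o roots_o] := roots_edge e.
rewrite cards1 eqxx /=; apply/andP; split.
  by apply/forallP=> x; apply/forallP=> y; rewrite !ffunE eqxx implybT.
rewrite /jdeg subn1 -(cardsC1 o); apply/eqP/eq_card => x.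
by rewrite !inE ffunE andbT roots_o.
Qed.

Lemma vertex_state_bideg w : [&& valid_state ends (vertex_state w),
  #|(vertex_state w).1| == 0 & jdeg ends (vertex_state w) == #|V| - 1].
Proof.
rewrite cards0 eqxx /=; apply/andP; split.
  by apply/forallP=> x; apply/forallP=> y; rewrite connect_set0; apply/implyP=> /eqP->.
rewrite /jdeg subn1 -(cardsC1 w); apply/eqP/eq_card => x.
by rewrite !inE ffunE roots_set0.
Qed.

Lemma bideg1_edge_state u :
  [&& valid_state ends u, #|u.1| == 1 & jdeg ends u == #|V| - 1] ->
  exists e, edge_state e = u.
Proof.
case: u => s c /and3P[/= c_valid /cards1P[e s_e] /eqP c_jdeg]; subst s.
exists e; congr pair.
have [o roots_o] := roots_edge e.
set S := [set x | roots (adj ends [set e]) x && c x].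
have S_o : S = [set~ o].
  apply/eqP; rewrite eqEcard cardsC1 -subn1 -c_jdeg leqnn andbT.
  by apply/subsetP=> x; rewrite !inE -roots_o => /andP[].
apply/ffunP=> z; rewrite ffunE.
have : fingraph.root (adj ends [set e]) z \in S.
  by rewrite S_o !inE -roots_o; exact: (roots_root (connect_sym_adj [set e])).
rewrite /S inE => /andP[_ c_root]; apply/esym.
move: c_valid => /forallP/(_ z)/forallP/(_ (fingraph.root (adj ends [set e]) z)).
by rewrite connect_root c_root => /eqP.
Qed.

Hypothesis Vpos : (0 < #|V|)%N.

Lemma bideg0_vertex_state u :
  [&& valid_state ends u, #|u.1| == 0 & jdeg ends u == #|V| - 1] ->
  exists w, vertex_state w = u.
Proof.
case: u => s c /and3P[/= _ /eqP/cards0_eq -> /eqP c_jdeg].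
have : #|~: [set x | c x]| == 1.
  have := cardsC [set x | c x].
  rewrite (_ : #|[set x | c x]| = #|V| - 1); last first.
    by rewrite -c_jdeg; apply: eq_card => x; rewrite !inE roots_set0.
  by move: #|~: _| => n; lia.
case/cards1P=> w c_w; exists w; congr pair; apply/ffunP=> z; rewrite ffunE.
by move/setP: c_w => /(_ z); rewrite !inE => <-; rewrite negbK.
Qed.

Lemma dstate_edge_state e k : k != e -> dstate ends k (edge_state e) = None.
Proof.
by move=> ke; rewrite /dstate /= (negbTE (not_connect_other_edge ke)) !ffunE.
Qed.

Lemma dstate_vertex_state w k : dstate ends k (vertex_state w) =
  if w \in ends_seq k then Some (edge_state k) else None.
Proof.
rewrite /dstate /= connect_set0 (negbTE (ends_neq k)) !ffunE !inE.
have [->|w1] /= := eqVneq w (ends k).1.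
  rewrite eq_sym (ends_neq k) /edge_state setU0; congr (Some (_, _)).
  apply/ffunP=> z; rewrite !ffunE; case: ifP => // z_k1.
  by apply: contraFneq z_k1 => ->; rewrite connect0.
have [->|w2] /= := eqVneq w (ends k).2; last by [].
rewrite /edge_state setU0; congr (Some (_, _)).
apply/ffunP=> z; rewrite !ffunE; case: ifP => // z_k1.
by apply: contraFneq z_k1 => ->; rewrite connect_sym_adj connect1 ?adj_edge.
Qed.

Local Open Scope ring_scope.

Lemma dcoef_edge_state e t : dcoef ends (edge_state e) t = 0.
Proof. by rewrite /dcoef big1 // => k; rewrite inE => ke; rewrite dstate_edge_state. Qed.

Lemma dcoef_vertex_state w t : dcoef ends (vertex_state w) t =
  \sum_k (if (w \in ends_seq k) && (edge_state k == t) then 1 else 0).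
Proof.
rewrite /dcoef; apply: eq_big => [k|k _]; first by rewrite inE.
rewrite (_ : [set f in set0 | _] = set0) ?cards0 ?expr0; last first.
  by apply/setP=> f; rewrite !inE.
by rewrite dstate_vertex_state; case: (w \in _).
Qed.

Lemma dif_pushf (T : finType) (f : T -> St V m) (a : T -> int) t :
  dif ends (pushf f a) t = \sum_x a x * dcoef ends (f x) t.
Proof.
rewrite ffunE; under eq_bigr do rewrite ffunE mulr_suml.
rewrite (exchange_big_dep xpredT) //=; apply: eq_bigr => x _.
by rewrite (big_pred1 (f x)) // => u; rewrite /= eq_sym.
Qed.

Lemma dif_pushf_edge_state h : dif ends (pushf edge_state h) = 0.
Proof.
apply/ffunP=> t; rewrite dif_pushf ffunE big1 // => e _.
by rewrite dcoef_edge_state mulr0.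
Qed.

Lemma dif_pushf_vertex_state a :
  dif ends (pushf vertex_state a) = pushf edge_state (edge_sum ends a).
Proof.
apply/ffunP=> t; rewrite dif_pushf ffunE.
under eq_bigr do rewrite dcoef_vertex_state mulr_sumr.
rewrite exchange_big [RHS]big_mkcond; apply: eq_bigr => k _.
case: (edge_state k == t); last by rewrite big1 // => w _; rewrite andbF mulr0.
have k21 : (ends k).2 != (ends k).1 by rewrite eq_sym ends_neq.
rewrite (bigD1 (ends k).1) // (bigD1 (ends k).2) //= !inE !eqxx orbT /= !mulr1.
rewrite big1 ?addr0 ?ffunE // => w /andP[w1 w2].
by rewrite !inE (negbTE w1) (negbTE w2) mulr0.
Qed.

Lemma inC_pushf (T : finType) (f : T -> St V m) (a : T -> int) i j :
  (forall x, [&& valid_state ends (f x), #|(f x).1| == i & jdeg ends (f x) == j]) ->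
  inC ends i j (pushf f a).
Proof. by move=> f_bideg u /pushf_supp[x <-]. Qed.

Lemma H_iso_incidence_coker (A : zmodType) :
  incidence_coker ends A -> H_iso ends 1 (#|V| - 1) A.
Proof.
case=> Phi [PhiB Phi_onto Phi_ker].
pose res (f : Chain V m) := [ffun e => f (edge_state e)].
have res_pushf (h : {ffun 'I_m -> int}) : res (pushf edge_state h) = h.
  by apply/ffunP=> e; rewrite ffunE pushfE //; apply: edge_state_inj.
exists (fun f => Phi (res f)); split.
- by move=> f g _ _; rewrite -PhiB; congr Phi; apply/ffunP=> e; rewrite !ffunE.
- move=> z; have [h <-] := Phi_onto z.
  exists (pushf edge_state h); last by rewrite res_pushf.
  by split; [apply: inC_pushf edge_state_bideg | apply: dif_pushf_edge_state].
move=> f [f_C1 _]; rewrite Phi_ker.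
have f_pushf : f = pushf edge_state (res f).
  by apply: (pushf_restrict edge_state_inj) => u /f_C1; apply: bideg1_edge_state.
split=> [[a res_f]|[g [g_C0 <-]]].
  exists (pushf vertex_state a); split; first exact: inC_pushf vertex_state_bideg.
  by rewrite dif_pushf_vertex_state -res_f -f_pushf.
have -> : g = pushf vertex_state [ffun w => g (vertex_state w)].
  by apply: (pushf_restrict vertex_state_inj) => u /g_C0; apply: bideg0_vertex_state.
by exists [ffun w => g (vertex_state w)]; rewrite dif_pushf_vertex_state res_pushf.
Qed.

End ChainGroups.

Unset Implicit Arguments.

Theorem corollary3p2 (V : finType) (m : nat) (ends : 'I_m -> V * V) :
  simple_graph ends -> connected_graph ends -> (0 < #|V|)%N ->
  (bipartite ends ->
     H_iso ends 1 (#|V| - 1) ('rV[int]_(m + 1 - #|V|)%N)) /\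
  (has_odd_cycle ends ->
     H_iso ends 1 (#|V| - 1) ('rV[int]_(m + 1 - #|V| - 1)%N * 'Z_2)%type).
Proof.
move=> simple conn Vpos; have [r _] := card_gt0P Vpos.
case: m ends simple conn => [|m] ends simple conn.
  split=> [_|odd_cycle]; first exact: H_iso_incidence_coker (coker_edgeless ends Vpos).
  by case: (odd_cycle_not_bipartite odd_cycle); exists (fun=> true) => -[].
split=> [bip|odd_cycle]; apply: H_iso_incidence_coker => //.
  exact: coker_bipartite conn r ord0 bip.
exact: coker_odd_cycle conn r ord0 odd_cycle.
Qed.
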